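(* Let $\mathcal V$ be a descent category and $f:X\to Y$, $g:Y\to Z$ morphisms of simplicial spaces. If $f$ and $g\circ f$ are hypercovers, then $g$ is a hypercover.
   Context: A descent category is a small category $\mathcal V$ with a subcategory of morphisms called covers such that: $\mathcal V$ has finite limits; pullbacks of covers are covers; if $f$ and $g\circ f$ are covers then $g$ is a cover. A simplicial space is a simplicial object in $\mathcal V$; $\mathrm{Map}(T,X)$ is the finite limit representing simplicial maps $T\to X$ for a finite simplicial set $T$; $\mathrm{Map}(S\hookrightarrow T,f)=\mathrm{Map}(S,X)\times_{\mathrm{Map}(S,Y)}\mathrm{Map}(T,Y)$. A morphism $f:X\to Y$ is a hypercover if $X_n\to\mathrm{Map}(\partial\Delta^n\hookrightarrow\Delta^n,f)$ is a cover for all $n\ge0$. *)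

From mathcomp Require Import all_boot.
Set Implicit Arguments. Unset Strict Implicit. Unset Printing Implicit Defensive.

(* [n] = {0,...,n} is 'I_n.+1; morphisms [m] -> [n] are monotone maps. *)
Definition monob m n (f : {ffun 'I_m.+1 -> 'I_n.+1}) : bool :=
  [forall i : 'I_m.+1, forall j : 'I_m.+1, (i <= j) ==> (f i <= f j)].

Definition dmor m n := {f : {ffun 'I_m.+1 -> 'I_n.+1} | monob f}.

Lemma monob_id n : monob [ffun i : 'I_n.+1 => i].
Proof. by apply/forallP => i; apply/forallP => j; apply/implyP; rewrite !ffunE. Qed.

Lemma monob_comp k m n (g : {ffun 'I_m.+1 -> 'I_n.+1}) (f : {ffun 'I_k.+1 -> 'I_m.+1}) :
  monob g -> monob f -> monob [ffun i => g (f i)].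
Proof.
move=> Hg Hf; apply/forallP => i; apply/forallP => j; apply/implyP => hij.
rewrite !ffunE.
have h1 := implyP (forallP (forallP Hf i) j) hij.
exact: (implyP (forallP (forallP Hg (f i)) (f j)) h1).
Qed.

Definition did n : dmor n n := exist (fun f => monob f) _ (monob_id n).
Definition dcomp k m n (b : dmor m n) (a : dmor k m) : dmor k n :=
  exist (fun f => monob f) _ (monob_comp (svalP b) (svalP a)).

(* surjective maps; the non-surjective maps [m] -> [n] are the m-simplices
   of the boundary \partial\Delta^n *)
Definition surjb m n (b : dmor m n) : bool := [forall j : 'I_n.+1, exists i : 'I_m.+1, sval b i == j].

Record category := Category {
  obj :> Type;
  hom : obj -> obj -> Type;
  idm : forall a, hom a a;
  cmp : forall a b c, hom b c -> hom a b -> hom a c;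
  cmp1m : forall a b (f : hom a b), cmp (idm b) f = f;
  cmpm1 : forall a b (f : hom a b), cmp f (idm a) = f;
  cmpA : forall a b c d (h : hom c d) (g : hom b c) (f : hom a b),
      cmp h (cmp g f) = cmp (cmp h g) f }.
Arguments hom {_}.
Arguments idm {_}.
Arguments cmp {_ _ _ _}.

Definition is_terminal (C : category) (t : C) : Prop :=
  forall a : C, exists! u : hom a t, True.

Definition is_pullback (C : category) (a b c P : C) (f : hom a c) (g : hom b c)
  (p1 : hom P a) (p2 : hom P b) : Prop :=
  cmp f p1 = cmp g p2 /\
  forall (Q : C) (q1 : hom Q a) (q2 : hom Q b), cmp f q1 = cmp g q2 ->
    exists! u : hom Q P, cmp p1 u = q1 /\ cmp p2 u = q2.

Record descent (C : category) (cover : forall a b : C, hom a b -> Prop) : Prop := {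
  dc_terminal : exists t : C, is_terminal t;
  dc_pullbacks : forall (a b c : C) (f : hom a c) (g : hom b c),
      exists (P : C) (p1 : hom P a) (p2 : hom P b), is_pullback f g p1 p2;
  dc_id : forall a : C, cover _ _ (idm a);
  dc_comp : forall (a b c : C) (f : hom a b) (g : hom b c),
      cover _ _ f -> cover _ _ g -> cover _ _ (cmp g f);
  dc_pullback : forall (a b c P : C) (f : hom a c) (g : hom b c)
      (p1 : hom P a) (p2 : hom P b),
      is_pullback f g p1 p2 -> cover _ _ g -> cover _ _ p1;
  dc_cancel : forall (a b c : C) (f : hom a b) (g : hom b c),
      cover _ _ f -> cover _ _ (cmp g f) -> cover _ _ g }.

Record sobj (C : category) := SObj {
  sob :> nat -> C;
  smap : forall m n, dmor m n -> hom (sob n) (sob m);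
  smap_id : forall n, smap (did n) = idm (sob n);
  smap_comp : forall k m n (b : dmor m n) (a : dmor k m),
      smap (dcomp b a) = cmp (smap a) (smap b) }.
Arguments smap {C} s {m n}.

Record smor (C : category) (X Y : sobj C) := SMor {
  scomp :> forall n, hom (X n) (Y n);
  snat : forall m n (b : dmor m n),
      cmp (scomp m) (smap X b) = cmp (smap Y b) (scomp n) }.

Lemma smor_comp_nat (C : category) (X Y Z : sobj C) (g : smor Y Z) (f : smor X Y) m n
  (b : dmor m n) :
  cmp (cmp (g m) (f m)) (smap X b) = cmp (smap Z b) (cmp (g n) (f n)).
Proof.
by rewrite -cmpA snat cmpA snat -cmpA.
Qed.

Definition smor_comp (C : category) (X Y Z : sobj C) (g : smor Y Z) (f : smor X Y)
  : smor X Z := SMor (smor_comp_nat g f).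

(* For W an object, a simplicial map \partial\Delta^k -> Hom(W, X_.) is a family
   cs indexed by the non-surjective b : [m] -> [k], natural in [m]; a simplicial
   map \Delta^k -> Hom(W, Y_.) is a natural family ct indexed by all b : [m]->[k].
   A map W -> Map(\partial\Delta^k -> \Delta^k, f)
        = Map(\partial\Delta^k, X) x_{Map(\partial\Delta^k, Y)} Map(\Delta^k, Y)
   is a pair (cs, ct) with f o cs = ct restricted to the boundary. *)
Definition bcone_ok (C : category) (X Y : sobj C) (f : smor X Y) (k : nat) (W : C)
  (cs : forall m (b : dmor m k), ~~ surjb b -> hom W (X m))
  (ct : forall m, dmor m k -> hom W (Y m)) : Prop :=
  (forall m n (b : dmor n k) (a : dmor m n) (h : ~~ surjb b)
          (h' : ~~ surjb (dcomp b a)),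
      cs m (dcomp b a) h' = cmp (smap X a) (cs n b h)) /\
  (forall m n (b : dmor n k) (a : dmor m n),
      ct m (dcomp b a) = cmp (smap Y a) (ct n b)) /\
  (forall m (b : dmor m k) (h : ~~ surjb b), cmp (f m) (cs m b h) = ct m b).

(* R together with (cs, ct) represents Map(\partial\Delta^k -> \Delta^k, f). *)
Definition is_rel_matching (C : category) (X Y : sobj C) (f : smor X Y) (k : nat) (R : C)
  (cs : forall m (b : dmor m k), ~~ surjb b -> hom R (X m))
  (ct : forall m, dmor m k -> hom R (Y m)) : Prop :=
  bcone_ok f cs ct /\
  forall (W : C) (cs' : forall m (b : dmor m k), ~~ surjb b -> hom W (X m))
         (ct' : forall m, dmor m k -> hom W (Y m)),
    bcone_ok f cs' ct' ->
    exists! u : hom W R,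
      (forall m b h, cmp (cs m b h) u = cs' m b h) /\
      (forall m b, cmp (ct m b) u = ct' m b).

(* f is a hypercover: for every n, the canonical map
   X_n -> Map(\partial\Delta^n -> \Delta^n, f) is a cover. *)
Definition is_hypercover (C : category) (cover : forall a b : C, hom a b -> Prop)
  (X Y : sobj C) (f : smor X Y) : Prop :=
  forall (n : nat) (R : C) (cs : forall m (b : dmor m n), ~~ surjb b -> hom R (X m))
         (ct : forall m, dmor m n -> hom R (Y m)),
    is_rel_matching f cs ct ->
    forall v : hom (X n) R,
      (forall m b h, cmp (cs m b h) v = smap X b) ->
      (forall m b, cmp (ct m b) v = cmp (smap Y b) (f n)) ->
      cover _ _ v.

From mathcomp Require Import all_boot.
From Stdlib Require Import ProofIrrelevance FunctionalExtensionality ClassicalEpsilon.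
Set Implicit Arguments. Unset Strict Implicit. Unset Printing Implicit Defensive.

(* Argue with functors of points. For a sub-complex K of Delta^n contained in
   K2, let T(K, K2) classify compatible maps K -> X, K2 -> Y, Delta^n -> Z.
   Adding to K a maximal face A of dimension k < n is a pullback of
   X_k -> M_f(k), the relative matching map of f, so by induction on K every
   T(K, K2) is representable and T(K, K2) -> T(0, K2) is a cover. With K the
   boundary of Delta^n this says that f_n : X_n -> M_f(n) = T(K, Delta^n) ->
   T(0, Delta^n) = Y_n is a cover, and that X_n -> M_gf(n) = T(K, K) ->
   T(0, K) = M_g(n), the matching map of g after f_n, is a cover. The
   cancellation axiom then makes the matching map of g a cover. *)

Section Presheaves.
Variable C : category.
Variable cover : forall a b : C, hom a b -> Prop.
Variable HC : descent cover.

Record psh := Psh {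
  sect :> C -> Type;
  pull : forall W W' : C, hom W' W -> sect W -> sect W';
  pull_id : forall W p, pull (idm W) p = p;
  pull_comp : forall W W' W'' (u : hom W' W) (u' : hom W'' W') p,
      pull (cmp u u') p = pull u' (pull u p) }.

Record ntr (P Q : psh) := Ntr {
  nt :> forall W, P W -> Q W;
  nt_nat : forall W W' (u : hom W' W) p, nt (@pull P _ _ u p) = @pull Q _ _ u (nt p) }.

Definition ncomp (P Q S : psh) (phi : ntr P Q) (psi : ntr Q S) : ntr P S.
refine (@Ntr P S (fun W p => psi W (phi W p)) _).
by move=> W W' u p; rewrite !nt_nat.
Defined.

Definition yoneda (X : C) : psh.
refine (@Psh (fun W => hom W X) (fun W W' u x => cmp x u) _ _).
- by move=> W p; rewrite cmpm1.
- by move=> W W' W'' u u' p; rewrite cmpA.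
Defined.

Definition yoneda_map (A B : C) (h : hom A B) : ntr (yoneda A) (yoneda B).
refine (@Ntr (yoneda A) (yoneda B) (fun W (x : hom W A) => cmp h x) _).
by move=> W W' u p; rewrite /= cmpA.
Defined.

Definition universal (P : psh) (R : C) (r : P R) :=
  forall W (p : P W), exists! u : hom W R, @pull P _ _ u r = p.

Definition representable (P : psh) := exists R (r : P R), universal r.

Definition ncover (P Q : psh) (phi : ntr P Q) :=
  forall R (r : P R) R' (r' : Q R'), universal r -> universal r' ->
  forall v : hom R R', @pull Q _ _ v r' = phi R r -> cover v.

Lemma universal_idm (X : C) : universal (P := yoneda X) (idm X).
Proof.
move=> W p; exists p; split; first by rewrite /= cmp1m.
by move=> u; rewrite /= cmp1m.
Qed.

Lemma representable_yoneda (X : C) : representable (yoneda X).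
Proof. by exists X, (idm X); apply: universal_idm. Qed.

Lemma universal_hom_inj (P : psh) R (r : P R) W (u u' : hom W R) :
  universal r -> @pull P _ _ u r = @pull P _ _ u' r -> u = u'.
Proof.
move=> hr e; have [u0 [_ hu]] := hr W (@pull P _ _ u r).
by rewrite -(hu u) // -(hu u') // -e.
Qed.

Lemma iso_cover (a b : C) (v : hom a b) (v' : hom b a) :
  cmp v v' = idm b -> cmp v' v = idm a -> cover v.
Proof.
move=> e1 e2.
have pb : is_pullback (idm b) (idm b) v v.
  split=> // Q q1 q2; rewrite !cmp1m => <-.
  exists (cmp v' q1); split; first by rewrite cmpA e1 cmp1m.
  by move=> x [hx _]; rewrite -hx cmpA e2 cmp1m.
exact: (dc_pullback HC pb (dc_id HC b)).
Qed.

Lemma universal_iso (P : psh) R (r : P R) S (s : P S) : universal r -> universal s ->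
  exists (i : hom R S) (i' : hom S R), @pull P _ _ i s = r /\ @pull P _ _ i' r = s /\
    cmp i i' = idm S /\ cmp i' i = idm R.
Proof.
move=> hr hs.
have [i [hi _]] := hs R r; have [i' [hi' _]] := hr S s.
exists i, i'; do 2 split => //; split.
  by apply: (universal_hom_inj hs); rewrite pull_comp hi hi' pull_id.
by apply: (universal_hom_inj hr); rewrite pull_comp hi' hi pull_id.
Qed.

Lemma ncover_universal (P Q : psh) (phi : ntr P Q) R (r : P R) R' (r' : Q R') :
  universal r -> universal r' ->
  (forall v : hom R R', @pull Q _ _ v r' = phi R r -> cover v) -> ncover phi.
Proof.
move=> hr hr' H S s S' s' hs hs' w hw.
have [i [i' [hi [_ [e1 e2]]]]] := universal_iso hr hs.
have [j [j' [_ [hj' [e3 e4]]]]] := universal_iso hr' hs'.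
have c0 : cover (cmp j' (cmp w i)).
  by apply: H; rewrite !pull_comp hj' hw -(nt_nat phi) hi.
have -> : w = cmp j (cmp (cmp j' (cmp w i)) i').
  by rewrite !cmpA e3 cmp1m -!cmpA e1 cmpm1.
apply: (dc_comp HC) (iso_cover e3 e4).
exact: (dc_comp HC (iso_cover e2 e1) c0).
Qed.

Lemma ncover_ext (P Q : psh) (phi psi : ntr P Q) :
  (forall W p, phi W p = psi W p) -> ncover phi -> ncover psi.
Proof. by move=> e h R r R' r' hr hr' v hv; apply: (h _ _ _ _ hr hr'); rewrite e. Qed.

Lemma ncover_comp (P Q S : psh) (phi : ntr P Q) (psi : ntr Q S) (chi : ntr P S) :
  representable Q -> (forall W p, chi W p = psi W (phi W p)) ->
  ncover phi -> ncover psi -> ncover chi.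
Proof.
move=> [RQ [rQ hQ]] e hphi hpsi R r R' r' hr hr' v hv.
have [a [ha _]] := hQ R (phi R r).
have [b [hb _]] := hr' RQ (psi RQ rQ).
have -> : v = cmp b a.
  by apply: (universal_hom_inj hr'); rewrite hv pull_comp hb -(nt_nat psi) ha e.
apply: (dc_comp HC); [exact: (hphi _ _ _ _ hr hQ) | exact: (hpsi _ _ _ _ hQ hr')].
Qed.

Lemma ncover_ncomp (P Q S : psh) (phi : ntr P Q) (psi : ntr Q S) :
  representable Q -> ncover phi -> ncover psi -> ncover (ncomp phi psi).
Proof. by move=> rQ; apply: ncover_comp. Qed.

Lemma ncover_cancel (P Q S : psh) (phi : ntr P Q) (psi : ntr Q S) :
  representable P -> ncover phi -> ncover (ncomp phi psi) -> ncover psi.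
Proof.
move=> [RP [rP hP]] hphi hchi R r R' r' hr hr' v hv.
have [a [ha _]] := hr RP (phi RP rP).
apply: (dc_cancel HC (f := a)); first exact: (hphi _ _ _ _ hP hr).
by apply: (hchi _ _ _ _ hP hr'); rewrite pull_comp hv -(nt_nat psi) ha.
Qed.

Record psh_iso (P Q : psh) := PshIso {
  iso_fwd :> ntr P Q;
  iso_bwd : ntr Q P;
  iso_fwdK : forall W p, iso_bwd W (iso_fwd W p) = p;
  iso_bwdK : forall W q, iso_fwd W (iso_bwd W q) = q }.

Definition psh_iso_sym (P Q : psh) (i : psh_iso P Q) : psh_iso Q P :=
  PshIso (iso_bwdK i) (iso_fwdK i).

Lemma ncover_psh_iso (P Q : psh) (i : psh_iso P Q) : ncover i.
Proof.
move=> R r R' r' hr hr' v hv.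
have [v' [hv' _]] := hr R' (iso_bwd i R' r').
apply: (@iso_cover _ _ v v').
  by apply: (universal_hom_inj hr'); rewrite pull_comp hv -(nt_nat i) hv' iso_bwdK pull_id.
by apply: (universal_hom_inj hr); rewrite pull_comp hv' -(nt_nat (iso_bwd i)) hv iso_fwdK pull_id.
Qed.

Lemma representable_psh_iso (P Q : psh) (i : psh_iso P Q) :
  representable P -> representable Q.
Proof.
move=> [R [r hr]]; exists R, (i R r) => W q.
have [u [hu hu']] := hr W (iso_bwd i W q).
exists u; split; first by rewrite -(nt_nat i) hu iso_bwdK.
by move=> u' h; apply: hu'; rewrite -h -(nt_nat i) iso_fwdK.
Qed.

(* The first two hypotheses say that Q is the pullback of al and be. *)
Lemma ncover_pullback (P1 P2 P3 Q : psh) (al : ntr P1 P3) (be : ntr P2 P3)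
  (p1 : ntr Q P1) (p2 : ntr Q P2) :
  (forall W q, al W (p1 W q) = be W (p2 W q)) ->
  (forall W a b, al W a = be W b -> exists! q, p1 W q = a /\ p2 W q = b) ->
  representable P1 -> representable P2 -> representable P3 ->
  representable Q /\ (ncover be -> ncover p1).
Proof.
move=> comm univ [R1 [r1 h1]] [R2 [r2 h2]] [R3 [r3 h3]].
have [A [hA _]] := h3 R1 (al R1 r1).
have [B [hB _]] := h3 R2 (be R2 r2).
have [P [q1 [q2 pb]]] := dc_pullbacks HC A B.
have e0 : al P (@pull P1 _ _ q1 r1) = be P (@pull P2 _ _ q2 r2).
  rewrite (nt_nat al) (nt_nat be) -hA -hB -!pull_comp; congr pull; exact: pb.1.
have [q0 [[hq1 hq2] _]] := univ _ _ _ e0.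
have repQ : universal q0.
  move=> W q.
  have [u1 [hu1 hu1']] := h1 W (p1 W q).
  have [u2 [hu2 hu2']] := h2 W (p2 W q).
  have eAB : cmp A u1 = cmp B u2.
    apply: (universal_hom_inj h3).
    by rewrite !pull_comp hA hB -(nt_nat al) -(nt_nat be) hu1 hu2 comm.
  have [u [[e1 e2] hu]] := pb.2 W u1 u2 eAB.
  exists u; split.
    have [q' [_ hq']] := univ W (p1 W q) (p2 W q) (comm W q).
    have E : p1 W (@pull Q _ _ u q0) = p1 W q /\ p2 W (@pull Q _ _ u q0) = p2 W q.
      by rewrite (nt_nat p1) (nt_nat p2) hq1 hq2 -!pull_comp e1 e2.
    by rewrite -(hq' _ E) (hq' q).
  move=> u' hu'; apply: hu; split.
    by apply/esym/hu1'; rewrite pull_comp -hq1 -(nt_nat p1) hu'.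
  by apply/esym/hu2'; rewrite pull_comp -hq2 -(nt_nat p2) hu'.
split; first by exists P, q0.
move=> hbe; apply: (ncover_universal repQ h1) => v hv.
have -> : v = q1 by apply: (universal_hom_inj h1); rewrite hv hq1.
apply: (dc_pullback HC pb); exact: (hbe _ _ _ _ h2 h3).
Qed.

End Presheaves.

Definition img m n (b : dmor m n) : {set 'I_n.+1} := [set sval b i | i : 'I_m.+1].

Definition down_closed n (K : {set {set 'I_n.+1}}) : Prop :=
  forall B B' : {set 'I_n.+1}, B' \subset B -> B' != set0 -> B \in K -> B' \in K.

Lemma dmor_eq m n (a b : dmor m n) : (forall i, sval a i = sval b i) -> a = b.
Proof.
case: a b => [fa ha] [fb hb] /= h.
have e : fa = fb by apply/ffunP.
by subst; congr exist; apply: bool_irrelevance.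
Qed.

Lemma dcomp_id_l m n (a : dmor m n) : dcomp (did n) a = a.
Proof. by apply: dmor_eq => i; rewrite /= !ffunE. Qed.

Lemma dcomp_id_r m n (a : dmor m n) : dcomp a (did m) = a.
Proof. by apply: dmor_eq => i; rewrite /= !ffunE. Qed.

Lemma dcompA k l m n (c : dmor m n) (b : dmor l m) (a : dmor k l) :
  dcomp c (dcomp b a) = dcomp (dcomp c b) a.
Proof. by apply: dmor_eq => i; rewrite /= !ffunE. Qed.

Lemma img_comp k m n (b : dmor m n) (a : dmor k m) : img (dcomp b a) \subset img b.
Proof.
apply/subsetP => x /imsetP [i _ ->]; rewrite /= ffunE.
by apply/imsetP; exists (sval a i).
Qed.

Lemma img_neq0 m n (b : dmor m n) : img b != set0.
Proof. by apply/set0Pn; exists (sval b ord0); apply/imsetP; exists ord0. Qed.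

Lemma surjbE m n (b : dmor m n) : surjb b = (img b == setT).
Proof.
apply/forallP/eqP => [h | h].
  apply/setP => j; rewrite inE; have /existsP [i /eqP <-] := h j.
  by apply/imsetP; exists i.
move=> j; have : j \in img b by rewrite h inE.
by case/imsetP => i _ ->; apply/existsP; exists i.
Qed.

Section FaceEmbedding.
Variables (n : nat) (A : {set 'I_n.+1}).
Hypothesis A_neq0 : 0 < #|A|.
Local Notation k := (#|A|.-1).

Definition face_fun : {ffun 'I_k.+1 -> 'I_n.+1} :=
  [ffun i : 'I_k.+1 => nth ord0 (enum A) i].

Lemma ltn_size_enum (i : 'I_k.+1) : i < size (enum A).
Proof. by apply: leq_trans (ltn_ord i) _; rewrite (prednK A_neq0) cardE. Qed.

Lemma face_fun_lt (i j : 'I_k.+1) : i < j -> face_fun i < face_fun j.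
Proof.
have sorted_A : sorted ltn (map val (enum A)).
  rewrite -[enum _](eq_filter (mem_enum _)).
  rewrite -(eq_filter (mem_map val_inj _)) -filter_map.
  by rewrite (sorted_filter ltn_trans) // unlock val_ord_enum iota_ltn_sorted.
move=> hij; rewrite !ffunE -!(nth_map ord0 0) ?ltn_size_enum //.
by apply: (sorted_ltn_nth ltn_trans 0 sorted_A); rewrite // inE size_map ltn_size_enum.
Qed.

Lemma face_fun_le (i j : 'I_k.+1) : (face_fun i <= face_fun j) = (i <= j).
Proof.
case: (ltngtP i j) => h.
- by rewrite ltnW // face_fun_lt.
- by apply/negbTE; rewrite -ltnNge face_fun_lt.
- by rewrite (val_inj h) leqnn.
Qed.

Lemma face_fun_inj : injective face_fun.
Proof. by move=> i j e; apply: val_inj; apply/eqP; rewrite eqn_leq -!face_fun_le e !leqnn. Qed.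

Lemma face_fun_mono : monob face_fun.
Proof. by apply/forallP => i; apply/forallP => j; apply/implyP; rewrite face_fun_le. Qed.

Definition face_emb : dmor k n := exist _ face_fun face_fun_mono.

Lemma img_face_emb : img face_emb = A.
Proof.
apply/setP => x; apply/imsetP/idP => [[i _ ->] | hx].
  by rewrite /= ffunE -mem_enum mem_nth ?ltn_size_enum.
have hi : index x (enum A) < k.+1 by rewrite (prednK A_neq0) cardE index_mem mem_enum.
by exists (Ordinal hi); rewrite //= ffunE /= nth_index // mem_enum.
Qed.

Lemma face_emb_factor m (b : dmor m n) : img b \subset A ->
  exists a : dmor m k, b = dcomp face_emb a.
Proof.
move=> hb.
have hin i : sval b i \in A by apply: (subsetP hb); apply/imsetP; exists i.
have hi i : index (sval b i) (enum A) < k.+1.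
  by rewrite (prednK A_neq0) cardE index_mem mem_enum.
have e i : face_fun (Ordinal (hi i)) = sval b i.
  by rewrite ffunE /= nth_index // mem_enum.
pose af := [ffun i => Ordinal (hi i)].
have am : monob af.
  apply/forallP => i; apply/forallP => j; apply/implyP => hij.
  rewrite !ffunE -face_fun_le !e.
  exact: (implyP (forallP (forallP (svalP b) i) j) hij).
have ea i : af i = Ordinal (hi i) by rewrite ffunE.
by exists (exist _ af am); apply: dmor_eq => i; rewrite /= ffunE ea e.
Qed.

Lemma face_emb_cancel m (a a' : dmor m k) : dcomp face_emb a = dcomp face_emb a' -> a = a'.
Proof.
move=> e; apply: dmor_eq => i; apply: face_fun_inj.
by have := congr1 (fun d : dmor m n => sval d i) e; rewrite /= !ffunE.
Qed.

Lemma img_face_emb_comp_sub m (a : dmor m k) : img (dcomp face_emb a) \subset A.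
Proof. by have := img_comp face_emb a; rewrite img_face_emb. Qed.

Lemma img_face_emb_compE m (a : dmor m k) : (img (dcomp face_emb a) == A) = surjb a.
Proof.
rewrite surjbE; apply/eqP/eqP => [h | h].
  apply/setP => j; rewrite inE.
  have hj : face_fun j \in img face_emb by apply/imsetP; exists j.
  have : face_fun j \in img (dcomp face_emb a) by rewrite h; rewrite img_face_emb in hj.
  case/imsetP => i _ e.
  have e' : face_fun j = face_fun (sval a i) by rewrite e /= [in LHS]ffunE.
  by rewrite (face_fun_inj e'); apply/imsetP; exists i.
apply/setP => x; rewrite -[in RHS]img_face_emb.
apply/imsetP/imsetP => [[i _ ->] | [j _ ->]].
  by exists (sval a i); rewrite //= ffunE.
have : j \in img a by rewrite h inE.
by case/imsetP => i _ ->; exists i => //; rewrite /= [RHS]ffunE.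
Qed.

End FaceEmbedding.

Section RelativeMatching.
Variable C : category.
Variable cover : forall a b : C, hom a b -> Prop.
Variables (X Y : sobj C) (f : smor X Y) (k : nat).

Definition bcone (W : C) := {p : (forall m (b : dmor m k), ~~ surjb b -> hom W (X m)) *
   (forall m, dmor m k -> hom W (Y m)) | bcone_ok f p.1 p.2}.

Lemma bcone_ok_pull W W' (u : hom W' W) cs ct : @bcone_ok C X Y f k W cs ct ->
  bcone_ok f (fun m b h => cmp (cs m b h) u) (fun m b => cmp (ct m b) u).
Proof.
move=> [h1 [h2 h3]]; split; [|split].
- by move=> m n b a h h'; rewrite h1 cmpA.
- by move=> m n b a; rewrite h2 cmpA.
- by move=> m b h; rewrite cmpA h3.
Qed.

Definition bcone_pull W W' (u : hom W' W) (p : bcone W) : bcone W' :=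
  exist _ (fun m b h => cmp ((sval p).1 m b h) u, fun m b => cmp ((sval p).2 m b) u)
    (bcone_ok_pull u (svalP p)).

Lemma bcone_eq W (p q : bcone W) :
  (forall m b h, (sval p).1 m b h = (sval q).1 m b h) ->
  (forall m b, (sval p).2 m b = (sval q).2 m b) -> p = q.
Proof.
case: p q => [[cs ct] ok] [[cs' ct'] ok'] /= e1 e2.
have E1 : cs = cs' by do 3 apply: functional_extensionality_dep => ?; apply: e1.
have E2 : ct = ct' by do 2 apply: functional_extensionality_dep => ?; apply: e2.
by subst; congr exist; apply: proof_irrelevance.
Qed.

Definition matching : psh C.
refine (@Psh C bcone bcone_pull _ _).
- by move=> W p; apply: bcone_eq => /= *; rewrite cmpm1.
- by move=> W W' W'' u u' p; apply: bcone_eq => /= *; rewrite cmpA.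
Defined.

Lemma bcone_ok_simplex W (x : hom W (X k)) :
  bcone_ok f (fun m b (_ : ~~ surjb b) => cmp (smap X b) x)
             (fun m (b : dmor m k) => cmp (smap Y b) (cmp (f k) x)).
Proof.
split; [|split].
- by move=> m n b a h h'; rewrite smap_comp cmpA.
- by move=> m n b a; rewrite smap_comp -cmpA.
- by move=> m b h; rewrite cmpA snat cmpA.
Qed.

Definition matching_map : ntr (yoneda (X k)) matching.
refine (@Ntr C (yoneda (X k)) matching
  (fun W (x : hom W (X k)) => exist _ (fun m b (_ : ~~ surjb b) => cmp (smap X b) x,
     fun m (b : dmor m k) => cmp (smap Y b) (cmp (f k) x)) (bcone_ok_simplex x) : bcone W) _).
by move=> W W' u p; apply: bcone_eq => /= *; rewrite !cmpA.
Defined.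

Lemma universal_rel_matching R (r : matching R) :
  universal r -> is_rel_matching f (sval r).1 (sval r).2.
Proof.
move=> hr; split; first exact: (svalP r).
move=> W cs' ct' ok.
have [u [hu hu']] := hr W (exist _ (cs', ct') ok).
exists u; split.
  split=> [m b h | m b].
    by have := congr1 (fun p : bcone W => (sval p).1 m b h) hu.
  by have := congr1 (fun p : bcone W => (sval p).2 m b) hu.
by move=> u' [e1 e2]; apply: hu'; apply: bcone_eq => /= *; rewrite ?e1 ?e2.
Qed.

Lemma rel_matching_universal R cs ct (hm : @is_rel_matching C X Y f k R cs ct) :
  universal (P := matching) (exist _ (cs, ct) hm.1).
Proof.
move=> W p; have [u [[h1 h2] hu']] := hm.2 W _ _ (svalP p).
exists u; split; first by apply: bcone_eq => /= *; rewrite ?h1 ?h2.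
move=> u' e; apply: hu'; split => [m b h | m b].
  by have := congr1 (fun p : bcone W => (sval p).1 m b h) e.
by have := congr1 (fun p : bcone W => (sval p).2 m b) e.
Qed.

Lemma rel_matching_representable R cs ct :
  @is_rel_matching C X Y f k R cs ct -> representable matching.
Proof. by move=> hm; exists R, (exist _ (cs, ct) hm.1); apply: rel_matching_universal. Qed.

Hypothesis HC : descent cover.

Lemma hypercover_ncover : is_hypercover cover f -> ncover cover matching_map.
Proof.
move=> H R r R' r' hr hr' v hv.
apply: (ncover_universal HC (@universal_idm _ (X k)) hr' _ hr hr' hv) => w hw.
apply: (H k R' _ _ (universal_rel_matching hr')) => [m b h | m b].
  by have := congr1 (fun p : bcone _ => (sval p).1 m b h) hw; rewrite /= cmpm1.
by have := congr1 (fun p : bcone _ => (sval p).2 m b) hw; rewrite /= cmpm1.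
Qed.

Lemma ncover_hypercover : ncover cover matching_map ->
  forall R cs ct, is_rel_matching f cs ct ->
    forall v : hom (X k) R,
      (forall m b h, cmp (cs m b h) v = smap X b) ->
      (forall m b, cmp (ct m b) v = cmp (smap Y b) (f k)) ->
      cover v.
Proof.
move=> H R cs ct hm v e1 e2.
apply: (H _ _ _ _ (@universal_idm _ (X k)) (rel_matching_universal hm)).
by apply: bcone_eq => /= *; rewrite ?e1 ?e2 cmpm1.
Qed.

End RelativeMatching.

Definition bdec (b : bool) : {b} + {~~ b} :=
  if b as c return {c} + {~~ c} then left erefl else right erefl.

Definition dif (b : bool) (T : Type) (F1 : b -> T) (F2 : T) : T :=
  match bdec b with left h => F1 h | right _ => F2 end.

Lemma dif_true (b : bool) T (F1 : b -> T) F2 (h : b) : dif F1 F2 = F1 h.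
Proof.
by rewrite /dif; case: (bdec b) => [h'|]; [rewrite (bool_irrelevance h h') | rewrite h].
Qed.

Lemma dif_false (b : bool) T (F1 : b -> T) F2 : ~~ b -> dif F1 F2 = F2.
Proof. by rewrite /dif; case: (bdec b) => // h; rewrite h. Qed.

(* For sets of faces K1 and K2 of Delta^n (a face is identified with its set of
   vertices), tcone K1 K2 W describes the maps from W into
   Map(K1, X) x_{Map(K1, Y)} Map(K2, Y) x_{Map(K2, Z)} Map(Delta^n, Z). *)
Section TripleCones.
Variable C : category.
Variables (X Y Z : sobj C) (f : smor X Y) (g : smor Y Z) (n : nat).

Section Cones.
Variables (K1 K2 : {set {set 'I_n.+1}}).

Definition tcone_data (W : C) :=
  ((forall m (b : dmor m n), img b \in K1 -> hom W (X m)) *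
   (forall m (b : dmor m n), img b \in K2 -> hom W (Y m)) *
   (forall m, dmor m n -> hom W (Z m)))%type.

Definition tcone_ok W (t : tcone_data W) : Prop :=
 (forall m m' (b : dmor m n) (a : dmor m' m) h h',
     t.1.1 m' (dcomp b a) h' = cmp (smap X a) (t.1.1 m b h)) /\
 (forall m m' (b : dmor m n) (a : dmor m' m) h h',
     t.1.2 m' (dcomp b a) h' = cmp (smap Y a) (t.1.2 m b h)) /\
 (forall m m' (b : dmor m n) (a : dmor m' m),
     t.2 m' (dcomp b a) = cmp (smap Z a) (t.2 m b)) /\
 (forall m (b : dmor m n) h h', cmp (f m) (t.1.1 m b h) = t.1.2 m b h') /\
 (forall m (b : dmor m n) h, cmp (g m) (t.1.2 m b h) = t.2 m b).

Definition tcone W := {t : tcone_data W | tcone_ok t}.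

Definition cx W (t : tcone W) := (sval t).1.1.
Definition cy W (t : tcone W) := (sval t).1.2.
Definition cz W (t : tcone W) := (sval t).2.
Arguments cx {W} t m b h.
Arguments cy {W} t m b h.
Arguments cz {W} t m b.

Lemma cx_congr W (t : tcone W) m (b b' : dmor m n) h h' :
  b = b' -> cx t m b h = cx t m b' h'.
Proof. by move=> e; subst; rewrite (bool_irrelevance h h'). Qed.

Lemma cy_congr W (t : tcone W) m (b b' : dmor m n) h h' :
  b = b' -> cy t m b h = cy t m b' h'.
Proof. by move=> e; subst; rewrite (bool_irrelevance h h'). Qed.

Lemma cx_nat W (t : tcone W) m m' (b : dmor m n) (a : dmor m' m) (b' : dmor m' n) h h' :
  b' = dcomp b a -> cx t m' b' h' = cmp (smap X a) (cx t m b h).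
Proof. by move=> e; subst; apply: (proj1 (svalP t)). Qed.

Lemma cy_nat W (t : tcone W) m m' (b : dmor m n) (a : dmor m' m) (b' : dmor m' n) h h' :
  b' = dcomp b a -> cy t m' b' h' = cmp (smap Y a) (cy t m b h).
Proof. by move=> e; subst; apply: (proj1 (proj2 (svalP t))). Qed.

Lemma cz_nat W (t : tcone W) m m' (b : dmor m n) (a : dmor m' m) (b' : dmor m' n) :
  b' = dcomp b a -> cz t m' b' = cmp (smap Z a) (cz t m b).
Proof. by move=> e; subst; apply: (proj1 (proj2 (proj2 (svalP t)))). Qed.

Lemma cx_f W (t : tcone W) m (b : dmor m n) h h' : cmp (f m) (cx t m b h) = cy t m b h'.
Proof. exact: (proj1 (proj2 (proj2 (proj2 (svalP t))))). Qed.

Lemma cy_g W (t : tcone W) m (b : dmor m n) h : cmp (g m) (cy t m b h) = cz t m b.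
Proof. exact: (proj2 (proj2 (proj2 (proj2 (svalP t))))). Qed.

Lemma tcone_eq W (p q : tcone W) :
  (forall m b h, cx p m b h = cx q m b h) ->
  (forall m b h, cy p m b h = cy q m b h) ->
  (forall m b, cz p m b = cz q m b) -> p = q.
Proof.
case: p q => [[[x1 y1] z1] ok] [[[x2 y2] z2] ok'] /= e1 e2 e3.
have E1 : x1 = x2 by do 3 apply: functional_extensionality_dep => ?; apply: e1.
have E2 : y1 = y2 by do 3 apply: functional_extensionality_dep => ?; apply: e2.
have E3 : z1 = z2 by do 2 apply: functional_extensionality_dep => ?; apply: e3.
by subst; congr exist; apply: proof_irrelevance.
Qed.

Lemma tcone_ok_pull W W' (u : hom W' W) (t : tcone W) :
  tcone_ok ((fun m b h => cmp (cx t m b h) u), (fun m b h => cmp (cy t m b h) u),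
            (fun m b => cmp (cz t m b) u)).
Proof.
split; [|split; [|split; [|split]]] => /=.
- by move=> m m' b a h h'; rewrite (cx_nat (a := a) _ h h') // cmpA.
- by move=> m m' b a h h'; rewrite (cy_nat (a := a) _ h h') // cmpA.
- by move=> m m' b a; rewrite (cz_nat (a := a) _ (erefl _)) cmpA.
- by move=> m b h h'; rewrite cmpA (cx_f _ _ h').
- by move=> m b h; rewrite cmpA cy_g.
Qed.

Definition tcone_pull W W' (u : hom W' W) (t : tcone W) : tcone W' :=
  exist _ _ (tcone_ok_pull u t).

Definition tcone_psh : psh C.
refine (@Psh C tcone tcone_pull _ _).
- by move=> W p; apply: tcone_eq => /= *; rewrite /cx /cy /cz /= cmpm1.
- by move=> W W' W'' u u' p; apply: tcone_eq => /= *; rewrite /cx /cy /cz /= cmpA.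
Defined.

End Cones.

Arguments cx {K1 K2 W} t m b h.
Arguments cy {K1 K2 W} t m b h.
Arguments cz {K1 K2 W} t m b.

Section Restriction.
Variables (K K' K2 : {set {set 'I_n.+1}}) (H : K \subset K').

Definition tcone_restr_fun W (t : tcone K' K2 W) : tcone K K2 W.
refine (exist _ ((fun m b h => cx t m b (subsetP H _ h)), cy t, cz t) _).
split; [|split; [|split; [|split]]] => /=.
- by move=> m m' b a h h'; apply: cx_nat.
- by move=> m m' b a h h'; apply: cy_nat.
- by move=> m m' b a; apply: cz_nat.
- by move=> m b h h'; apply: cx_f.
- by move=> m b h; apply: cy_g.
Defined.

Lemma cx_restr W (t : tcone K' K2 W) m b h :
  cx (tcone_restr_fun t) m b h = cx t m b (subsetP H _ h).
Proof. by []. Qed.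

Definition tcone_restr : ntr (tcone_psh K' K2) (tcone_psh K K2).
refine (@Ntr C (tcone_psh K' K2) (tcone_psh K K2) tcone_restr_fun _).
by move=> W W' u p; apply: tcone_eq.
Defined.

End Restriction.

Lemma tcone_restr_comp (K K' K'' K2 : {set {set 'I_n.+1}}) (H1 : K \subset K')
  (H2 : K' \subset K'') (H3 : K \subset K'') W (q : tcone_psh K'' K2 W) :
  tcone_restr K2 H3 W q = tcone_restr K2 H1 W (tcone_restr K2 H2 W q).
Proof. by apply: tcone_eq => //= m b h; rewrite !cx_restr; apply: cx_congr. Qed.

End TripleCones.

Arguments cx {C X Y Z f g n K1 K2 W} t m b h.
Arguments cy {C X Y Z f g n K1 K2 W} t m b h.
Arguments cz {C X Y Z f g n K1 K2 W} t m b.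

Section AddFace.
Variable C : category.
Variable cover : forall a b : C, hom a b -> Prop.
Variable HC : descent cover.
Variables (X Y Z : sobj C) (f : smor X Y) (g : smor Y Z) (n : nat).
Variables (K K2 : {set {set 'I_n.+1}}) (A : {set 'I_n.+1}).
Hypotheses (A_in_K : A \in K) (A_neq0 : 0 < #|A|) (dcK : down_closed K)
  (A_max : forall B, B \in K -> A \subset B -> B = A)
  (sub_K_K2 : K \subset K2) (dcK2 : down_closed K2).

Local Notation K0 := (K :\ A).
Local Notation k := (#|A|.-1).
Local Notation s := (face_emb A_neq0).
Local Notation T := (tcone_psh f g).

Lemma down_closed_remove_max : down_closed K0.
Proof.
move=> B B' sub nz; rewrite !in_setD1 => /andP [nB hB]; rewrite (dcK sub nz hB) andbT.
by apply: contra nB => /eqP e; subst B'; rewrite (A_max hB sub).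
Qed.

Lemma K0_sub_K : K0 \subset K. Proof. exact: subsetDl. Qed.

Lemma img_face_boundary m (a : dmor m k) : ~~ surjb a -> img (dcomp s a) \in K0.
Proof.
move=> ns; rewrite in_setD1 img_face_emb_compE ns /=.
exact: (dcK (img_face_emb_comp_sub A_neq0 a) (img_neq0 _) A_in_K).
Qed.

Lemma img_face_K2 m (a : dmor m k) : img (dcomp s a) \in K2.
Proof. exact: (dcK2 (img_face_emb_comp_sub A_neq0 a) (img_neq0 _) (subsetP sub_K_K2 _ A_in_K)). Qed.

Lemma img_face_emb_K : img s \in K. Proof. by rewrite img_face_emb. Qed.

Lemma img_notin_K0 m (b : dmor m n) : img b \in K -> img b \notin K0 -> img b = A.
Proof. by move=> h; rewrite in_setD1 h andbT negbK => /eqP. Qed.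

Definition face_boundary_fun W (t : T K0 K2 W) : matching f k W.
refine (exist _ (fun m a h => cx t m (dcomp s a) (img_face_boundary h),
                 fun m a => cy t m (dcomp s a) (img_face_K2 a)) _).
split; [|split] => /=.
- by move=> m m' b a h h'; apply: cx_nat; rewrite dcompA.
- by move=> m m' b a; apply: cy_nat; rewrite dcompA.
- by move=> m b h; apply: cx_f.
Defined.

Definition face_boundary : ntr (T K0 K2) (matching f k).
refine (@Ntr C (T K0 K2) (matching f k) face_boundary_fun _).
by move=> W W' u p; apply: bcone_eq.
Defined.

Definition face_value : ntr (T K K2) (yoneda (X k)).
refine (@Ntr C (T K K2) (yoneda (X k)) (fun W t => cx t k s img_face_emb_K) _).
by move=> W W' u p.
Defined.

Lemma face_square_comm W (q : T K K2 W) :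
  face_boundary W (tcone_restr f g K2 K0_sub_K W q) = matching_map f k W (face_value W q).
Proof.
apply: bcone_eq => /= [m a h | m a]; first by rewrite cx_restr; apply: cx_nat.
have img_s_K2 := subsetP sub_K_K2 _ img_face_emb_K.
by rewrite (cx_f q img_face_emb_K img_s_K2); apply: cy_nat.
Qed.

Lemma const_dmor_mono m : monob [ffun _ : 'I_m.+1 => (ord0 : 'I_k.+1)].
Proof. by apply/forallP => i; apply/forallP => j; rewrite !ffunE leqnn implybT. Qed.

Definition const_dmor m : dmor m k := exist (fun h => monob h) _ (const_dmor_mono m).

Definition factor_face m (b : dmor m n) : dmor m k :=
  epsilon (inhabits (const_dmor m)) (fun a => b = dcomp s a).

Lemma factor_faceE m (b : dmor m n) : img b \subset A -> b = dcomp s (factor_face b).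
Proof.
move=> h; apply: (epsilon_spec (inhabits (const_dmor m)) (fun a => b = dcomp s a)).
exact: face_emb_factor.
Qed.

Lemma factor_face_emb : factor_face s = did k.
Proof. by apply: (@face_emb_cancel _ _ A_neq0); rewrite -factor_faceE ?img_face_emb // dcomp_id_r. Qed.

Lemma factor_face_surj m (b : dmor m n) : img b \in K -> img b \notin K0 ->
  b = dcomp s (factor_face b) /\ surjb (factor_face b).
Proof.
move=> h hb; have eA := img_notin_K0 h hb.
have eb : b = dcomp s (factor_face b) by apply: factor_faceE; rewrite eA.
by split=> //; rewrite -img_face_emb_compE -eb eA.
Qed.

Section Glue.
Variables (W : C) (t0 : T K0 K2 W) (x : hom W (X k)).
Hypothesis E : face_boundary W t0 = matching_map f k W x.

Lemma glue_boundary_x m (a : dmor m k) h :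
  cx t0 m (dcomp s a) (img_face_boundary h) = cmp (smap X a) x.
Proof. by have := congr1 (fun p : bcone f k W => (sval p).1 m a h) E. Qed.

Lemma glue_boundary_y m (a : dmor m k) :
  cy t0 m (dcomp s a) (img_face_K2 a) = cmp (smap Y a) (cmp (f k) x).
Proof. by have := congr1 (fun p : bcone f k W => (sval p).2 m a) E. Qed.

(* Simplices landing in K0 are sent by t0; the others factor through the new
   face A and are sent through x. *)
Definition glue_x m (b : dmor m n) (_ : img b \in K) : hom W (X m) :=
  dif (fun h0 : img b \in K0 => cx t0 m b h0) (cmp (smap X (factor_face b)) x).
Arguments glue_x : clear implicits.

Lemma glue_x_in m (b : dmor m n) h (h0 : img b \in K0) : glue_x m b h = cx t0 m b h0.
Proof. exact: dif_true. Qed.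

Lemma glue_x_out m (b : dmor m n) h :
  img b \notin K0 -> glue_x m b h = cmp (smap X (factor_face b)) x.
Proof. exact: dif_false. Qed.

Lemma glue_x_nat m m' (b : dmor m n) (a : dmor m' m) h h' :
  glue_x m' (dcomp b a) h' = cmp (smap X a) (glue_x m b h).
Proof.
case: (boolP (img b \in K0)) => hb.
  have hba : img (dcomp b a) \in K0.
    exact: down_closed_remove_max (img_comp b a) (img_neq0 _) hb.
  by rewrite (glue_x_in _ hba) (glue_x_in _ hb); apply: cx_nat.
have [eb _] := factor_face_surj h hb.
have eba : dcomp b a = dcomp s (dcomp (factor_face b) a) by rewrite {1}eb dcompA.
rewrite (glue_x_out _ hb).
case: (boolP (img (dcomp b a) \in K0)) => hba.
  have ns : ~~ surjb (dcomp (factor_face b) a).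
    apply/negP => sj; move: hba.
    by rewrite eba in_setD1 (eqP (etrans (img_face_emb_compE _ _) sj)) eqxx.
  by rewrite (glue_x_in _ hba) (cx_congr _ _ (img_face_boundary ns) eba)
    glue_boundary_x smap_comp -cmpA.
rewrite (glue_x_out _ hba).
have -> : factor_face (dcomp b a) = dcomp (factor_face b) a.
  apply: (@face_emb_cancel _ _ A_neq0); rewrite -eba -factor_faceE //.
  by rewrite -(img_notin_K0 h hb) img_comp.
by rewrite smap_comp -cmpA.
Qed.

Lemma glue_ok : tcone_ok f g (glue_x, cy t0, cz t0).
Proof.
split; [|split; [|split; [|split]]] => /=.
- by move=> m m' b a h h'; apply: glue_x_nat.
- by move=> m m' b a h h'; apply: cy_nat.
- by move=> m m' b a; apply: cz_nat.
- move=> m b h h'.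
  case: (boolP (img b \in K0)) => hb; first by rewrite (glue_x_in _ hb); apply: cx_f.
  have [eb _] := factor_face_surj h hb.
  by rewrite (glue_x_out _ hb) cmpA snat -cmpA -glue_boundary_y; apply: cy_congr.
- by move=> m b h; apply: cy_g.
Qed.

Definition glue : T K K2 W := exist _ (glue_x, cy t0, cz t0) glue_ok.

Lemma cx_glue m b h : cx glue m b h = glue_x m b h. Proof. by []. Qed.

Lemma glue_restr : tcone_restr f g K2 K0_sub_K W glue = t0.
Proof. by apply: tcone_eq => //= m b h; rewrite cx_restr cx_glue (glue_x_in _ h). Qed.

Lemma face_value_glue : face_value W glue = x.
Proof.
rewrite /= cx_glue glue_x_out; last by rewrite in_setD1 img_face_emb eqxx.
by rewrite factor_face_emb smap_id cmp1m.
Qed.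

Lemma glue_uniq (q : T K K2 W) :
  tcone_restr f g K2 K0_sub_K W q = t0 -> face_value W q = x -> q = glue.
Proof.
move=> e1 e2; apply: tcone_eq.
- move=> m b h; rewrite cx_glue.
  case: (boolP (img b \in K0)) => hb.
    rewrite (glue_x_in _ hb) -e1 /= cx_restr.
    by rewrite (bool_irrelevance h (subsetP K0_sub_K _ hb)).
  have [eb _] := factor_face_surj h hb.
  by rewrite (glue_x_out _ hb) -e2 /=; apply: cx_nat.
- by move=> m b h; transitivity (cy t0 m b h); rewrite // -e1.
- by move=> m b; transitivity (cz t0 m b); rewrite // -e1.
Qed.

End Glue.

(* T K K2 is the pullback of T (K :\ A) K2 -> M_f(k) <- X_k. *)
Lemma add_face : representable (T K0 K2) -> representable (matching f k) ->
  ncover cover (matching_map f k) ->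
  representable (T K K2) /\ ncover cover (tcone_restr f g K2 K0_sub_K).
Proof.
move=> r1 r3 hc.
have := ncover_pullback HC face_square_comm _ r1 (representable_yoneda (X k)) r3.
case=> [W t x e | rQ hQ]; last by split=> //; apply: hQ.
exists (glue e); split; first by split; [apply: glue_restr | apply: face_value_glue].
by move=> q [e1 e2]; rewrite (glue_uniq e e1 e2).
Qed.

End AddFace.

Section Filtration.
Variable C : category.
Variable cover : forall a b : C, hom a b -> Prop.
Variable HC : descent cover.
Variables (X Y Z : sobj C) (f : smor X Y) (g : smor Y Z) (n : nat).
Variable K2 : {set {set 'I_n.+1}}.
Hypothesis dcK2 : down_closed K2.
Hypothesis hyp_below : forall k, k < n ->
  representable (matching f k) /\ ncover cover (matching_map f k).
Hypothesis repr0 : representable (tcone_psh f g set0 K2).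

Lemma ncover_tcone_restr00 : ncover cover (tcone_restr f g K2 (sub0set set0)).
Proof.
have e W p : tcone_restr f g K2 (sub0set set0) W (tcone_restr f g K2 (sub0set set0) W p) = p.
  by apply: tcone_eq => //= m b h; rewrite !cx_restr; apply: cx_congr.
exact: (ncover_psh_iso HC (i := PshIso e e)).
Qed.

(* Induction on K, removing a face A of maximal size: A is not a proper face
   of anything in K, and its dimension #|A|.-1 is below n. *)
Lemma tcone_restr0_ncover (K : {set {set 'I_n.+1}}) :
  down_closed K -> K \subset K2 -> set0 \notin K -> setT \notin K ->
  representable (tcone_psh f g K K2) /\ ncover cover (tcone_restr f g K2 (sub0set K)).
Proof.
move: {2}#|K| (leqnn #|K|) => N; elim: N K => [|N IH] K hN dcK sub_K_K2 n0 nT;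
  case: (set_0Vmem K) => [-> | [B0 hB0]]; try by split=> //; apply: ncover_tcone_restr00.
  by move: hN; rewrite leqn0 cards_eq0 => /eqP eK; rewrite eK inE in hB0.
pose A := [arg max_(B > B0 in K) #|B|].
have [A_in_K A_maxcard] : A \in K /\ forall B, B \in K -> #|B| <= #|A|.
  by rewrite /A; case: arg_maxnP.
have A_max B : B \in K -> A \subset B -> B = A.
  by move=> hB sub; apply/esym/eqP; rewrite eqEcard sub A_maxcard.
have A_neq0 : 0 < #|A| by rewrite card_gt0; apply: contraNneq n0 => <-.
have dim_lt : #|A|.-1 < n.
  have : A \proper setT by rewrite properT; apply: contraNneq nT => <-.
  by move/proper_card; rewrite cardsT card_ord -ltnS prednK.
have card_K0 : #|K :\ A| <= N by move: hN; rewrite (cardsD1 A K) A_in_K add1n ltnS.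
have n0' : set0 \notin K :\ A by rewrite in_setD1 (negbTE n0) andbF.
have nT' : setT \notin K :\ A by rewrite in_setD1 (negbTE nT) andbF.
have dcK0 := down_closed_remove_max dcK A_max.
have [r0 c0] := IH _ card_K0 dcK0 (subset_trans (@K0_sub_K _ K A) sub_K_K2) n0' nT'.
have [rM cM] := hyp_below dim_lt.
have [rK cK] := add_face HC A_in_K A_neq0 dcK A_max sub_K_K2 dcK2 r0 rM cM.
split=> //; apply: (ncover_comp HC r0 _ cK c0) => W p.
exact: tcone_restr_comp.
Qed.

End Filtration.

Section BoundaryIsos.
Variable C : category.
Variables (X Y Z : sobj C) (f : smor X Y) (g : smor Y Z) (n : nat).

Definition boundary : {set {set 'I_n.+1}} := [set B | (B != setT) && (B != set0)].

Lemma in_boundary m (b : dmor m n) : (img b \in boundary) = ~~ surjb b.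
Proof. by rewrite inE img_neq0 andbT surjbE. Qed.

Lemma boundary_nsurj m (b : dmor m n) : img b \in boundary -> ~~ surjb b.
Proof. by rewrite in_boundary. Qed.

Lemma nsurj_boundary m (b : dmor m n) : ~~ surjb b -> img b \in boundary.
Proof. by rewrite in_boundary. Qed.

Lemma notin_set0 m (b : dmor m n) : img b \in (set0 : {set {set 'I_n.+1}}) -> False.
Proof. by rewrite in_set0. Qed.

Lemma in_setT_img m (b : dmor m n) : img b \in (setT : {set {set 'I_n.+1}}).
Proof. by rewrite in_setT. Qed.

Lemma down_closed_boundary : down_closed boundary.
Proof.
move=> B B' sub nz; rewrite !inE nz andbT => /andP [hB _]; apply: contra hB => /eqP e.
by rewrite -subTset -e.
Qed.

Lemma down_closed_setT : down_closed (setT : {set {set 'I_n.+1}}).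
Proof. by move=> *; rewrite in_setT. Qed.

Lemma set0_notin_boundary : set0 \notin boundary. Proof. by rewrite inE eqxx andbF. Qed.
Lemma setT_notin_boundary : setT \notin boundary. Proof. by rewrite inE eqxx. Qed.

Local Notation T := (tcone_psh f g).
Local Notation gf := (smor_comp g f).
Local Notation S0 := (set0 : {set {set 'I_n.+1}}).
Local Notation ST := (setT : {set {set 'I_n.+1}}).

Definition matching_comp_fwd W (p : matching gf n W) : T boundary boundary W.
refine (exist _ ((fun m b h => (sval p).1 m b (boundary_nsurj h)),
                 (fun m b h => cmp (f m) ((sval p).1 m b (boundary_nsurj h))), (sval p).2) _).
have [h1 [h2 h3]] := svalP p.
split; [|split; [|split; [|split]]] => /=.
- by move=> *; apply: h1.
- by move=> m m' b a h h'; rewrite (h1 _ _ _ _ (boundary_nsurj h)) cmpA snat -cmpA.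
- by move=> *; apply: h2.
- by move=> m b h h'; rewrite (bool_irrelevance h h').
- by move=> m b h; rewrite cmpA -(h3 _ _ (boundary_nsurj h)).
Defined.

Definition matching_comp_bwd W (t : T boundary boundary W) : matching gf n W.
refine (exist _ ((fun m b h => cx t m b (nsurj_boundary h)), cz t) _).
split; [|split] => /=.
- by move=> m m' b a h h'; apply: cx_nat.
- by move=> m m' b a; apply: cz_nat.
- by move=> m b h; rewrite -cmpA (cx_f t _ (nsurj_boundary h)) cy_g.
Defined.

Definition matching_comp_iso : psh_iso (matching gf n) (T boundary boundary).
unshelve refine (@PshIso C _ _ (@Ntr C _ _ matching_comp_fwd _) (@Ntr C _ _ matching_comp_bwd _) _ _).
- by move=> W W' u p; apply: tcone_eq => //= *; rewrite /cy /= cmpA.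
- by move=> W W' u p; apply: bcone_eq.
- move=> W p; apply: bcone_eq => //= m b h.
  by rewrite /cx /= (bool_irrelevance (boundary_nsurj (nsurj_boundary h)) h).
- move=> W t; apply: tcone_eq => //= m b h; rewrite /cx /cy /=.
    by rewrite (bool_irrelevance (nsurj_boundary (boundary_nsurj h)) h).
  exact: cx_f.
Defined.

Definition matching_snd_fwd W (p : matching g n W) : T S0 boundary W.
refine (exist _ ((fun m b h => False_rect _ (notin_set0 h)),
                 (fun m b h => (sval p).1 m b (boundary_nsurj h)), (sval p).2) _).
have [h1 [h2 h3]] := svalP p.
split; [|split; [|split; [|split]]] => /=.
- by move=> m m' b a h; case: (notin_set0 h).
- by move=> *; apply: h1.
- by move=> *; apply: h2.
- by move=> m b h; case: (notin_set0 h).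
- by move=> m b h; apply: h3.
Defined.

Definition matching_snd_bwd W (t : T S0 boundary W) : matching g n W.
refine (exist _ ((fun m b h => cy t m b (nsurj_boundary h)), cz t) _).
split; [|split] => /=.
- by move=> m m' b a h h'; apply: cy_nat.
- by move=> m m' b a; apply: cz_nat.
- by move=> m b h; apply: cy_g.
Defined.

Definition matching_snd_iso : psh_iso (matching g n) (T S0 boundary).
unshelve refine (@PshIso C _ _ (@Ntr C _ _ matching_snd_fwd _) (@Ntr C _ _ matching_snd_bwd _) _ _).
- by move=> W W' u p; apply: tcone_eq => //= m b h; case: (notin_set0 h).
- by move=> W W' u p; apply: bcone_eq.
- move=> W p; apply: bcone_eq => //= m b h.
  by rewrite /cy /= (bool_irrelevance (boundary_nsurj (nsurj_boundary h)) h).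
- move=> W t; apply: tcone_eq => //= m b h; first by case: (notin_set0 h).
  by rewrite /cy /= (bool_irrelevance (nsurj_boundary (boundary_nsurj h)) h).
Defined.

Definition matching_fst_fwd W (p : matching f n W) : T boundary ST W.
refine (exist _ ((fun m b h => (sval p).1 m b (boundary_nsurj h)),
                 (fun m b _ => (sval p).2 m b),
                 (fun m b => cmp (g m) ((sval p).2 m b))) _).
have [h1 [h2 h3]] := svalP p.
split; [|split; [|split; [|split]]] => /=.
- by move=> *; apply: h1.
- by move=> *; apply: h2.
- by move=> m m' b a; rewrite h2 cmpA snat -cmpA.
- by move=> m b h h'; apply: h3.
- by [].
Defined.

Definition matching_fst_bwd W (t : T boundary ST W) : matching f n W.
refine (exist _ ((fun m b h => cx t m b (nsurj_boundary h)),
                 (fun m b => cy t m b (in_setT_img b))) _).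
split; [|split] => /=.
- by move=> m m' b a h h'; apply: cx_nat.
- by move=> m m' b a; apply: cy_nat.
- by move=> m b h; apply: cx_f.
Defined.

Definition matching_fst_iso : psh_iso (matching f n) (T boundary ST).
unshelve refine (@PshIso C _ _ (@Ntr C _ _ matching_fst_fwd _) (@Ntr C _ _ matching_fst_bwd _) _ _).
- by move=> W W' u p; apply: tcone_eq => //= *; rewrite /cz /= cmpA.
- by move=> W W' u p; apply: bcone_eq.
- move=> W p; apply: bcone_eq => //= m b h.
  by rewrite /cx /= (bool_irrelevance (boundary_nsurj (nsurj_boundary h)) h).
- move=> W t; apply: tcone_eq => [m b h | m b h | m b] /=.
  + by rewrite /cx /= (bool_irrelevance (nsurj_boundary (boundary_nsurj h)) h).
  + by rewrite /cy /= (bool_irrelevance (in_setT_img b) h).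
  + exact: cy_g.
Defined.

Definition yoneda_tcone_fwd W (y : hom W (Y n)) : T S0 ST W.
refine (exist _ ((fun m b h => False_rect _ (notin_set0 h)),
                 (fun m b _ => cmp (smap Y b) y),
                 (fun m b => cmp (smap Z b) (cmp (g n) y))) _).
split; [|split; [|split; [|split]]] => /=.
- by move=> m m' b a h; case: (notin_set0 h).
- by move=> *; rewrite smap_comp -cmpA.
- by move=> *; rewrite smap_comp -cmpA.
- by move=> m b h; case: (notin_set0 h).
- by move=> m b h; rewrite cmpA snat -cmpA.
Defined.

Definition yoneda_tcone_iso : psh_iso (yoneda (Y n)) (T S0 ST).
unshelve refine (@PshIso C _ _ (@Ntr C (yoneda (Y n)) _ yoneda_tcone_fwd _)
  (@Ntr C _ (yoneda (Y n)) (fun W (t : T S0 ST W) => cy t n (did n) (in_setT_img _)) _) _ _).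
- move=> W W' u p; apply: tcone_eq => [m b h | m b h | m b] /=.
  + by case: (notin_set0 h).
  + by rewrite /tcone_pull /cy /= cmpA.
  + by rewrite /tcone_pull /cz /= !cmpA.
- by [].
- by move=> W p; rewrite /= /cy /= smap_id cmp1m.
- move=> W t; apply: tcone_eq => [m b h | m b h | m b] /=.
  + by case: (notin_set0 h).
  + by rewrite /cy /=; apply/esym/cy_nat; rewrite dcomp_id_l.
  + rewrite /cz /= (cy_g t (in_setT_img (did n))).
    by apply/esym/cz_nat; rewrite dcomp_id_l.
Defined.

End BoundaryIsos.

Definition smor_id (C : category) (X : sobj C) : smor X X.
refine (@SMor C X X (fun n => idm (X n)) _).
by move=> m n b; rewrite cmp1m cmpm1.
Defined.

Lemma tcone_boundary_restr0_ncover (C : category) (cover : forall a b : C, hom a b -> Prop)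
  (HC : descent cover) (X Y Z : sobj C) (f : smor X Y) (g : smor Y Z) n
  (K2 : {set {set 'I_n.+1}}) :
  down_closed K2 -> boundary n \subset K2 ->
  (forall k, k < n -> representable (matching f k) /\ ncover cover (matching_map f k)) ->
  representable (tcone_psh f g set0 K2) ->
  representable (tcone_psh f g (boundary n) K2) /\
  ncover cover (tcone_restr f g K2 (sub0set (boundary n))).
Proof.
move=> dcK2 sub below r0.
exact: (tcone_restr0_ncover HC dcK2 below r0 (@down_closed_boundary n) sub
  (@set0_notin_boundary n) (@setT_notin_boundary n)).
Qed.

Section Hypercover.
Variable C : category.
Variable cover : forall a b : C, hom a b -> Prop.
Variable HC : descent cover.
Variables (X Y : sobj C) (f : smor X Y).
Hypothesis hf : is_hypercover cover f.

(* Existence of M_f(k), by induction on k; the identity of Y only serves as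
   the auxiliary map of the triple cones. *)
Lemma hypercover_matching k :
  representable (matching f k) /\ ncover cover (matching_map f k).
Proof.
split; last exact: (hypercover_ncover HC hf).
elim/ltn_ind: k => k IH.
have below j : j < k -> representable (matching f j) /\ ncover cover (matching_map f j).
  by move=> hj; split; [apply: IH | apply: (hypercover_ncover HC hf)].
pose iY := yoneda_tcone_iso f (smor_id Y) k.
have r0 := representable_psh_iso iY (representable_yoneda (Y k)).
have [rT _] := tcone_boundary_restr0_ncover HC (@down_closed_setT k) (subsetT _) below r0.
exact: representable_psh_iso (psh_iso_sym (matching_fst_iso f (smor_id Y) k)) rT.
Qed.

(* f_n factors as X_n -> M_f(n) = T(boundary, all) -> T(empty, all) = Y_n. *)
Lemma ncover_component n : ncover cover (yoneda_map (f n)).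
Proof.
pose iY := yoneda_tcone_iso f (smor_id Y) n.
pose iM := matching_fst_iso f (smor_id Y) n.
have r0 := representable_psh_iso iY (representable_yoneda (Y n)).
have [rT cT] := tcone_boundary_restr0_ncover HC (@down_closed_setT n) (subsetT _)
  (fun k _ => hypercover_matching k) r0.
have [rM cM] := hypercover_matching n.
have c1 := ncover_ncomp HC rM cM (ncover_psh_iso HC (i := iM)).
have c2 := ncover_ncomp HC (representable_psh_iso iM rM) c1 cT.
have c3 := ncover_ncomp HC r0 c2 (ncover_psh_iso HC (i := psh_iso_sym iY)).
apply: ncover_ext c3 => W x /=.
by rewrite /cy /= /cy /= smap_id cmp1m.
Qed.

Variables (Z : sobj C) (g : smor Y Z).
Hypothesis hgf : is_hypercover cover (smor_comp g f).

(* X_n -> M_{gf}(n) = T(boundary, boundary) -> T(empty, boundary) = M_g(n)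
   is the matching map of g after f_n. *)
Lemma ncover_component_matching n : representable (matching g n) ->
  ncover cover (ncomp (yoneda_map (f n)) (matching_map g n)).
Proof.
move=> rMg.
pose iG := matching_snd_iso f g n.
pose iGF := matching_comp_iso f g n.
have r0 := representable_psh_iso iG rMg.
have [rT cT] := tcone_boundary_restr0_ncover HC (@down_closed_boundary n) (subxx _)
  (fun k _ => hypercover_matching k) r0.
have rM := representable_psh_iso (psh_iso_sym iGF) rT.
have c1 := ncover_ncomp HC rM (hypercover_ncover HC hgf) (ncover_psh_iso HC (i := iGF)).
have c2 := ncover_ncomp HC rT c1 cT.
have c3 := ncover_ncomp HC r0 c2 (ncover_psh_iso HC (i := psh_iso_sym iG)).
apply: ncover_ext c3 => W x /=.
apply: bcone_eq => /= [m b h | m b]; first by rewrite /cy /= /cy /= [LHS]cmpA snat -cmpA.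
by rewrite /cz /= /cz /= -cmpA.
Qed.

End Hypercover.

Theorem lemma3p18 (C : category) (cover : forall a b : C, hom a b -> Prop)
  (HC : descent cover) (X Y Z : sobj C) (f : smor X Y) (g : smor Y Z) :
  is_hypercover cover f -> is_hypercover cover (smor_comp g f) ->
  is_hypercover cover g.
Proof.
move=> hf hgf n R cs ct hm.
have rMg := rel_matching_representable hm.
apply: (ncover_hypercover _ hm).
apply: (ncover_cancel HC (representable_yoneda (X n)) (ncover_component HC hf (n := n))).
exact: (ncover_component_matching HC hf hgf rMg).
Qed.
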